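(* Let $\gamma\in(0,1)$ and $\alpha_n=\gamma/(1+n\gamma)$ for $n\ge0$. Then for nonnegative integers $n,s$ and a positive integer $r$, \[ \mu_{n,r,s}=\begin{cases}\delta_{n+r,s}&\text{if } s\ge n+r,\\[2pt] -\dfrac{n\gamma^2}{(1+(r-1)\gamma)(1+s\gamma)}&\text{if } n-1<s<n+r,\\[2pt] \dfrac{(1-\gamma)\gamma}{(1+(r-1)\gamma)(1+s\gamma)}&\text{if } 0\le s\le n-1.\end{cases} \]
   Context: For a polynomial $f(z)=\sum_{k=0}^n a_kz^k$ of degree $n$, write $\overline{f}(z)=\sum_k\overline{a_k}z^k$ and $f^*(z)=z^n\overline{f}(1/z)$. Given $(\alpha_n)$ with $|\alpha_n|<1$, define monic $\Phi_n$ by $\Phi_0=1$, $\Phi_{n+1}(z)=z\Phi_n(z)-\overline{\alpha_n}\Phi_n^*(z)$. Let $\mathcal{L}$ be the unique linear functional on Laurent polynomials with $\mathcal{L}(1)=1$ and $\mathcal{L}(\Phi_m(z)\overline{\Phi_n}(1/z))=0$ for $m\neq n$; set $\langle f,g\rangle=\mathcal{L}(f(z)\overline{g}(1/z))$ and $\mu_{n,r,s}=\langle\Phi_s(z),z^n\Phi_r(z)\rangle/\langle\Phi_s,\Phi_s\rangle$. *)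

From mathcomp Require Import all_boot all_order all_algebra.
Set Implicit Arguments. Unset Strict Implicit. Unset Printing Implicit Defensive.
Import Order.TTheory GRing.Theory Num.Theory.
Local Open Scope ring_scope.

Section OPUC.
Variable C : numClosedFieldType.

(* f^*(z) = z^n \overline{f}(1/z), n = deg f: reverse and conjugate the
   coefficients. *)
Definition polystar (p : {poly C}) : {poly C} :=
  \poly_(i < size p) Num.conj (p`_((size p).-1 - i)).

Fixpoint Phi (alpha : nat -> C) (n : nat) : {poly C} :=
  match n with
  | 0 => 1
  | n'.+1 => 'X * Phi alpha n' - Num.conj (alpha n') *: polystar (Phi alpha n')
  end.

(* A linear functional L on Laurent polynomials is given by its moments
   c k = L(z^k), k : int.  Then
   <f,g> = L(f(z) \overline{g}(1/z)) = sum_{i,j} f_i conj(g_j) c(i-j). *)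
Definition ipL (c : int -> C) (f g : {poly C}) : C :=
  \sum_(i < size f) \sum_(j < size g)
     f`_i * Num.conj (g`_j) * c (i%:Z - j%:Z).

Definition is_OPUC_functional (alpha : nat -> C) (c : int -> C) : Prop :=
  c 0 = 1 /\ forall m n : nat, m <> n -> ipL c (Phi alpha m) (Phi alpha n) = 0.

Definition mu (alpha : nat -> C) (c : int -> C) (n r s : nat) : C :=
  ipL c (Phi alpha s) ('X^n * Phi alpha r) / ipL c (Phi alpha s) (Phi alpha s).

End OPUC.

From mathcomp Require Import all_boot all_order all_algebra.
From mathcomp Require Import zify ring.
Set Implicit Arguments. Unset Strict Implicit. Unset Printing Implicit Defensive.
Import Order.TTheory GRing.Theory Num.Theory.
Local Open Scope ring_scope.

(* For alpha_k = gamma/(1 + k gamma) the Szego recursion is solved by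
   Phi_k = z^k - beta_k (1 + z + ... + z^(k-1)) with
   beta_k = gamma/(1 + (k-1) gamma), because
   beta_k (1 - beta_(k+1)) = beta_(k+1) = alpha_k.  The conditions
   <Phi_m, 1> = <1, Phi_m> = 0 then force, by induction on k, the moments
   L(z^k) = gamma for k <> 0: L is integration against
   (1 - gamma) dtheta/2pi + gamma delta_1, so that
   <f, g> = gamma f(1) conj(g(1)) + (1 - gamma) sum_i f_i conj(g_i).
   Both <Phi_s, z^n Phi_r> and <Phi_s, Phi_s> thereby become counts of
   overlapping coefficient ranges, and mu_(n,r,s) is their ratio in each range
   of s. *)

Section Sums.
Variable R : nzRingType.

Lemma sum_ord_indicator_eq N s (F : nat -> R) : (s < N)%N ->
  \sum_(i < N) ((i : nat) == s)%:R * F i = F s.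
Proof.
move=> ltsN; have := @big_ord1_eq R 0 +%R F s N; rewrite ltsN big_mkcond => <-.
by apply: eq_bigr => i _; case: eqP; rewrite ?mul1r ?mul0r.
Qed.

Lemma sum_ord_indicator_range N m n : (n <= N)%N ->
  \sum_(i < N) ((m <= i) && (i < n))%N%:R = (n - m)%:R :> R.
Proof.
move=> lenN; rewrite -sumr_const_nat (big_nat_widen _ _ _ _ _ lenN).
rewrite big_geq_mkord [RHS]big_mkcond /=; apply: eq_bigr => i _.
by rewrite andbC; case: (_ && _).
Qed.

Lemma sum_ord_widen0 m N (F : nat -> R) : (m <= N)%N ->
  (forall i, (m <= i)%N -> F i = 0) -> \sum_(i < m) F i = \sum_(i < N) F i.
Proof.
move=> lemN F0; rewrite (big_ord_widen N F lemN) big_mkcond; apply: eq_bigr => i _.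
by case: ltnP => // /F0.
Qed.

End Sums.

Section MomentFunctionals.
Variable C : numClosedFieldType.
Implicit Types (c : int -> C) (f h p : {poly C}).

Lemma ipL_widen c f h N : (size f <= N)%N -> (size h <= N)%N ->
  ipL c f h = \sum_(i < N) \sum_(j < N) f`_i * Num.conj h`_j * c (i%:Z - j%:Z).
Proof.
move=> lefN lehN; pose F i j := f`_i * Num.conj h`_j * c (i%:Z - j%:Z).
rewrite /ipL (sum_ord_widen0 (F := fun i => \sum_(j < size h) F i j) lefN).
  apply: eq_bigr => i _; apply: sum_ord_widen0 => // j lehj.
  by rewrite /F (nth_default 0 lehj) rmorph0 mulr0 mul0r.
by move=> i lefi; apply: big1 => j _; rewrite /F (nth_default 0 lefi) !mul0r.
Qed.

Lemma ipL_point_mass_moments a b c f h N :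
  (forall k, c k = a + b * (k == 0)%:R) -> (size f <= N)%N -> (size h <= N)%N ->
  ipL c f h = a * f.[1] * Num.conj h.[1] + b * \sum_(i < N) f`_i * Num.conj h`_i.
Proof.
move=> cE lefN lehN; rewrite (ipL_widen c lefN lehN).
rewrite (horner_coef_wide 1 lefN) (horner_coef_wide 1 lehN).
rewrite rmorph_sum -mulrA mulr_suml !mulr_sumr -big_split /=.
apply: eq_bigr => i _; rewrite mulr_sumr.
rewrite -(sum_ord_indicator_eq (fun j => b * (f`_i * Num.conj h`_j)) (ltn_ord i)).
rewrite mulr_sumr -big_split /=.
apply: eq_bigr => j _; rewrite cE subr_eq0 eqz_nat !expr1n !mulr1 eq_sym; ring.
Qed.

Lemma polystar_real p : p \is a polyOver Num.real ->
  polystar p = \poly_(i < size p) p`_((size p).-1 - i).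
Proof. by move=> /polyOverP preal; apply: eq_poly => i _; apply: conj_Creal. Qed.

End MomentFunctionals.

Section SingleMassPoint.
Variables (C : numClosedFieldType) (gamma : C).
Hypotheses (gamma_gt0 : 0 < gamma) (gamma_lt1 : gamma < 1).

Definition alpha_mass (k : nat) : C := gamma / (1 + k%:R * gamma).

Definition beta_mass (k : nat) : C := gamma / (1 + (k%:R - 1) * gamma).

Definition Phi_mass (k : nat) : {poly C} :=
  \poly_(i < k.+1) ((i == k)%:R - beta_mass k * (i < k)%:R).

Lemma alpha_denom_neq0 k : 1 + k%:R * gamma != 0.
Proof. by rewrite lt0r_neq0 // ltr_wpDr ?ltr01 // mulr_ge0 ?ler0n ?ltW. Qed.

Lemma beta_denom_neq0 k : 1 + (k%:R - 1) * gamma != 0.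
Proof.
rewrite (_ : 1 + _ = 1 - gamma + k%:R * gamma); last by ring.
by rewrite lt0r_neq0 // ltr_wpDr ?subr_gt0 // mulr_ge0 ?ler0n ?ltW.
Qed.

Lemma one_sub_gamma_neq0 : 1 - gamma != 0.
Proof. by rewrite lt0r_neq0 ?subr_gt0. Qed.

Lemma beta_mass_real k : beta_mass k \is Num.real.
Proof.
by rewrite rpredM ?rpredV ?rpredD ?rpredM ?rpredB ?rpred1 ?rpred_nat ?gtr0_real.
Qed.

Lemma beta_massS k : beta_mass k.+1 = alpha_mass k.
Proof. by rewrite /beta_mass -natr1 addrK. Qed.

Lemma coef_Phi_mass k i : (Phi_mass k)`_i = (i == k)%:R - beta_mass k * (i < k)%:R.
Proof.
rewrite coef_poly ltnS; have [// | ltki] := leqP i k.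
by rewrite gtn_eqF // ltnNge (ltnW ltki) mulr0 subr0.
Qed.

Lemma size_Phi_mass k : size (Phi_mass k) = k.+1.
Proof. by rewrite size_poly_eq // eqxx ltnn mulr0 subr0 oner_neq0. Qed.

Lemma Phi_mass_real k : Phi_mass k \is a polyOver Num.real.
Proof.
apply/polyOverP => i; rewrite coef_Phi_mass.
by apply: realB; [exact: realn | apply: realM; [exact: beta_mass_real | exact: realn]].
Qed.

Lemma beta_massS_rec k : beta_mass k * (1 - beta_mass k.+1) = beta_mass k.+1.
Proof.
have := alpha_denom_neq0 k; have := beta_denom_neq0 k.
rewrite beta_massS /alpha_mass /beta_mass => ? ?; field; exact/andP.
Qed.

Lemma Phi_alpha_mass k : Phi alpha_mass k = Phi_mass k.
Proof.
elim: k => [|k IHk]; apply/polyP => i.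
  by rewrite coef1 coef_Phi_mass ltn0 mulr0 subr0.
rewrite /= IHk coefB coefXM coefZ polystar_real ?Phi_mass_real // size_Phi_mass.
rewrite -beta_massS conj_Creal ?beta_mass_real // !coef_Phi_mass coef_poly.
case: i => [|i] /=; first by rewrite coef_Phi_mass subn0 eqxx ltnn mulr0 subr0.
rewrite !ltnS eqSS; have [ltik | leki] := ltnP i k; last by rewrite mulr0 subr0.
rewrite coef_Phi_mass ltn_eqF //.
have [-> ->] : (k - i.+1 == k)%N = false /\ (k - i.+1 < k)%N = true by split; lia.
by rewrite -[in RHS]beta_massS_rec /=; ring.
Qed.

Lemma moments_from_orthogonality (e : nat -> C) : e 0%N = 1 ->
    (forall m, (0 < m)%N -> \sum_(i < m.+1) (Phi_mass m)`_i * e i = 0) ->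
  forall k, (0 < k)%N -> e k = gamma.
Proof.
move=> e0 orth; elim/ltn_ind => k IHk k_gt0.
have sum_lower : \sum_(i < k) (Phi_mass k)`_i * e i = - gamma.
  rewrite (eq_bigr (fun i : 'I_k => - beta_mass k * e i)) => [|i _]; last first.
    by rewrite coef_Phi_mass ltn_ord ltn_eqF // sub0r mulr1 mulNr.
  case: k k_gt0 IHk => // k _ IHk; rewrite -mulr_sumr big_ord_recl e0.
  rewrite (eq_bigr (fun=> gamma)) => [|i _]; last exact: IHk (ltn_ord _) _.
  rewrite sumr_const card_ord beta_massS /alpha_mass -mulr_natl.
  by field; exact: alpha_denom_neq0.
move: (orth k k_gt0); rewrite big_ord_recr /= sum_lower coef_Phi_mass eqxx ltnn.
by rewrite mulr0 subr0 mul1r addrC => /eqP; rewrite subr_eq0 => /eqP.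
Qed.

Lemma OPUC_functional_mass_moments c : is_OPUC_functional alpha_mass c ->
  forall k, c k = gamma + (1 - gamma) * (k == 0)%:R.
Proof.
case=> c0 orth.
have coef_real m i : Num.conj (Phi_mass m)`_i = (Phi_mass m)`_i.
  exact/conj_Creal/polyOverP/Phi_mass_real.
have c_pos : forall k, (0 < k)%N -> c k%:Z = gamma.
  apply: moments_from_orthogonality => // m m_gt0.
  rewrite -[RHS](orth m 0%N); last lia.
  rewrite /ipL [Phi _ 0]/= Phi_alpha_mass size_Phi_mass size_poly1.
  by apply: eq_bigr => i _; rewrite big_ord1 coef1 rmorph1 mulr1 subr0.
have c_neg : forall k, (0 < k)%N -> c (- k%:Z) = gamma.
  apply: moments_from_orthogonality => [|m m_gt0]; first by rewrite oppr0.
  rewrite -[RHS](orth 0%N m); last lia.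
  rewrite /ipL [Phi _ 0]/= Phi_alpha_mass size_Phi_mass size_poly1.
  by rewrite big_ord1; apply: eq_bigr => i _; rewrite coef1 coef_real mul1r sub0r.
case=> [[|k]|k]; first by rewrite c0 mulr1 addrC subrK.
  by rewrite c_pos // mulr0 addr0.
by rewrite NegzE c_neg // mulr0 addr0.
Qed.

Lemma Phi_mass_at1 k : (Phi_mass k).[1] = 1 - beta_mass k * k%:R.
Proof.
rewrite horner_coef size_Phi_mass.
rewrite (eq_bigr (fun i : 'I_k.+1 => ((i : nat) == k)%:R * 1 - beta_mass k * (i < k)%:R)).
  rewrite sumrB (sum_ord_indicator_eq (fun=> 1)) // -mulr_sumr.
  by rewrite (sum_ord_indicator_range _ 0) ?subn0.
by move=> i _; rewrite coef_Phi_mass expr1n !mulr1.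
Qed.

Lemma coef_XnPhi_mass n r i : ('X^n * Phi_mass r)`_i =
  (i == n + r)%N%:R - beta_mass r * ((n <= i) && (i < n + r))%N%:R.
Proof.
rewrite coefXnM coef_Phi_mass; have [ltin | leni] := ltnP i n.
  by rewrite ltn_eqF ?ltn_addr // mulr0 subr0.
by rewrite -(eqn_add2l n) -(ltn_add2l n) subnKC.
Qed.

Lemma coef_dot_Phi_mass N s n r : (s < N)%N -> (n + r < N)%N ->
  \sum_(i < N) (Phi_mass s)`_i * Num.conj ('X^n * Phi_mass r)`_i =
  (s == n + r)%N%:R - beta_mass r * ((n <= s) && (s < n + r))%N%:R
  - beta_mass s * ((n + r < s)%N%:R - beta_mass r * (minn s (n + r) - n)%N%:R).
Proof.
move=> ltsN ltnrN; pose XnPhi := 'X^n * Phi_mass r.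
have XnPhi_real : XnPhi \is a polyOver Num.real.
  by apply: polyOver_mulr_2closed; [exact: polyOverXn | exact: Phi_mass_real].
rewrite (eq_bigr (fun i : 'I_N => ((i : nat) == s)%:R * XnPhi`_i
    - beta_mass s * (((i : nat) == n + r)%N%:R * (i < s)%N%:R
                     - beta_mass r * ((n <= i) && (i < minn s (n + r)))%N%:R))).
  rewrite sumrB (sum_ord_indicator_eq (fun i => XnPhi`_i)) // -mulr_sumr sumrB.
  rewrite (sum_ord_indicator_eq (fun i => (i < s)%N%:R)) // -mulr_sumr.
  have le_min_N : (minn s (n + r) <= N)%N by rewrite geq_min ltnW.
  by rewrite (sum_ord_indicator_range _ _ le_min_N) coef_XnPhi_mass.
move=> i _; rewrite conj_Creal ?(polyOverP XnPhi_real) // coef_Phi_mass coef_XnPhi_mass.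
have -> : ((n <= i) && (i < minn s (n + r)))%N%:R
          = (i < s)%N%:R * ((n <= i) && (i < n + r))%N%:R :> C.
  by rewrite -natrM ltn_min; case: (n <= i)%N; case: (i < s)%N; rewrite ?mul1n ?mul0n.
ring.
Qed.

Lemma Phi_mass_at1_real k : Num.conj (Phi_mass k).[1] = (Phi_mass k).[1].
Proof. exact/conj_Creal/rpred_horner/real1/Phi_mass_real. Qed.

Section MassFunctional.
Variable c : int -> C.
Hypothesis c_mass : forall k, c k = gamma + (1 - gamma) * (k == 0)%:R.

Lemma ipL_Phi_mass n r s :
  ipL c (Phi_mass s) ('X^n * Phi_mass r) =
  gamma * (1 - beta_mass s * s%:R) * (1 - beta_mass r * r%:R)
  + (1 - gamma) * ((s == n + r)%N%:R - beta_mass r * ((n <= s) && (s < n + r))%N%:R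
      - beta_mass s * ((n + r < s)%N%:R - beta_mass r * (minn s (n + r) - n)%N%:R)).
Proof.
have size_XnPhi : (size ('X^n * Phi_mass r)%R <= n + r.+1)%N.
  by rewrite (leq_trans (size_polyMleq _ _)) // size_polyXn size_Phi_mass.
rewrite (@ipL_point_mass_moments _ _ _ _ _ _ (s + n + r).+1 c_mass); first last.
- by rewrite (leq_trans size_XnPhi) //; lia.
- by rewrite size_Phi_mass; lia.
rewrite hornerM hornerXn expr1n mul1r Phi_mass_at1_real !Phi_mass_at1.
by rewrite coef_dot_Phi_mass //; lia.
Qed.

Lemma ipL_Phi_mass_norm s :
  ipL c (Phi_mass s) (Phi_mass s) =
  (1 - gamma) * (1 + s%:R * gamma) / (1 + (s%:R - 1) * gamma).
Proof.
have := ipL_Phi_mass 0 s s; rewrite expr0 mul1r => ->.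
rewrite add0n eqxx ltnn andbF minnn subn0 /beta_mass /=.
by move: (beta_denom_neq0 s) => ?; field.
Qed.

End MassFunctional.

End SingleMassPoint.

Theorem proposition4p6 (C : numClosedFieldType) (gamma : C)
  (hg0 : 0 < gamma) (hg1 : gamma < 1) (c : int -> C)
  (hL : is_OPUC_functional (fun k : nat => gamma / (1 + k%:R * gamma)) c)
  (n r s : nat) (hr : (0 < r)%N) :
  let mu_nrs := mu (fun k : nat => gamma / (1 + k%:R * gamma)) c n r s in
  [/\ ((n + r <= s)%N -> mu_nrs = (s == n + r)%:R),
      ((n <= s < n + r)%N ->
         mu_nrs = - (n%:R * gamma ^+ 2)
                  / ((1 + (r%:R - 1) * gamma) * (1 + s%:R * gamma)))
    & ((s < n)%N ->
         mu_nrs = (1 - gamma) * gamma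
                  / ((1 + (r%:R - 1) * gamma) * (1 + s%:R * gamma)))].
Proof.
have c_mass := OPUC_functional_mass_moments hg0 hg1 hL.
rewrite /mu !(Phi_alpha_mass hg0 hg1) (ipL_Phi_mass_norm hg0 hg1 c_mass).
rewrite (ipL_Phi_mass hg0 hg1 c_mass) /beta_mass.
pose denoms_neq0 :=
  (beta_denom_neq0 hg0 hg1, alpha_denom_neq0 hg0, one_sub_gamma_neq0 hg1).
split=> [le_nr_s | /andP[le_n_s lt_s_nr] | lt_s_n].
- case: ltngtP le_nr_s => // [_ | eq_s] _; rewrite andbF /=.
    by rewrite addKn; field; rewrite ?denoms_neq0.
  by rewrite (_ : (s - n)%N = r); [field; rewrite ?denoms_neq0 | lia].
- rewrite le_n_s lt_s_nr (ltn_eqF lt_s_nr) (leq_gtF (ltnW lt_s_nr)).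
  by rewrite (minn_idPl (ltnW lt_s_nr)) natrB //=; field; rewrite ?denoms_neq0.
- have lt_s_nr := ltn_addr r lt_s_n.
  rewrite (ltn_eqF lt_s_nr) (ltn_geF lt_s_n) (leq_gtF (ltnW lt_s_nr)).
  rewrite (minn_idPl (ltnW lt_s_nr)) (eqP (ltnW lt_s_n)) /=.
  by field; rewrite ?denoms_neq0.
Qed.
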